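(* Let $a\in\mathbb{R}$, $\lambda\in[0,1)$, and let $f=h+\overline{g}$ with $h(z)=z+\sum_{n\ge2}a_nz^n$, $g(z)=\sum_{n\ge1}b_nz^n$ analytic in $\mathbb{D}$, satisfying $h-g=k_a$ and $g'/h'=\lambda z$ in $\mathbb{D}$. Then $$|a_2|\le |a|+\frac{\lambda}{2},\qquad |a_3|\le\frac13\left(\lambda^2+2|a|\lambda+2a^2+1\right),$$ $$|a_4|\le \frac13|a|^3+\frac23|a|+\frac14\lambda\left(\lambda^2+2|a|\lambda+2a^2+1\right),$$ $$|b_3|\le\frac13\lambda^2+\frac23|a|\lambda,\qquad |b_4|\le\frac14\lambda\left(\lambda^2+2|a|\lambda+2a^2+1\right).$$ All of these inequalities are sharp.
   Context: $\mathbb{D}$ is the open unit disk. For $a\neq0$, $k_a(z)=\frac{1}{2a}\left[\left(\frac{1+z}{1-z}\right)^a-1\right]$ (principal branch), and $k_0(z)=\frac12\log\frac{1+z}{1-z}$. *)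

From Stdlib Require Import Reals.
From Coquelicot Require Export Coquelicot.
Open Scope R_scope.

Definition Cexp (z : C) : C :=
  (exp (Re z) * cos (Im z), exp (Re z) * sin (Im z)).

(* principal argument, with values in (-PI, PI] *)
Definition Carg (w : C) : R :=
  if Rlt_dec 0 (Re w) then atan (Im w / Re w)
  else if Rlt_dec (Re w) 0 then
    (if Rle_dec 0 (Im w) then atan (Im w / Re w) + PI
     else atan (Im w / Re w) - PI)
  else if Rlt_dec 0 (Im w) then PI / 2
  else if Rlt_dec (Im w) 0 then - (PI / 2)
  else 0.

Definition Clog (w : C) : C := (ln (Cmod w), Carg w).

Definition Cpowr (w : C) (a : R) : C := Cexp (Cmult (RtoC a) (Clog w)).

Definition k_fun (a : R) (z : C) : C :=
  let w := Cdiv (Cplus (RtoC 1) z) (Cminus (RtoC 1) z) in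
  if Req_EM_T a 0 then Cmult (RtoC (1/2)) (Clog w)
  else Cmult (Cinv (RtoC (2 * a))) (Cminus (Cpowr w a) (RtoC 1)).

(* f = h + conj g with h(z) = sum a_n z^n (a_0 = 0, a_1 = 1),
   g(z) = sum b_n z^n (b_0 = 0), both convergent (hence analytic) in D,
   h - g = k_a and g'/h' = lambda z in D. *)
Definition in_class (a lam : R) (h g : C -> C) (ca cb : nat -> C) : Prop :=
  ca 0%nat = RtoC 0 /\ ca 1%nat = RtoC 1 /\ cb 0%nat = RtoC 0 /\
  (forall z : C, Cmod z < 1 ->
     @is_series C_AbsRing C_NormedModule (fun n => Cmult (ca n) (Cpow z n)) (h z) /\
     @is_series C_AbsRing C_NormedModule (fun n => Cmult (cb n) (Cpow z n)) (g z) /\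
     Cminus (h z) (g z) = k_fun a z /\
     exists dh dg : C,
       @is_derive C_AbsRing C_NormedModule h z dh /\
       @is_derive C_AbsRing C_NormedModule g z dg /\
       dh <> RtoC 0 /\ Cdiv dg dh = Cmult (RtoC lam) z).

Definition Q (a lam : R) : R := lam ^ 2 + 2 * Rabs a * lam + 2 * a ^ 2 + 1.

(* Both defining relations are linear in the coefficients: h - g = k_a gives
   a_n - b_n = k_n, the Taylor coefficients of k_a, and g' = lam z h' gives
   n b_n = lam (n - 1) a_(n-1).  Hence the class consists of a single pair (h, g).
   In the recursion for its coefficients, a only enters as the factor 2 a in front of
   earlier coefficients and all other weights are nonnegative, so the coefficients
   are real and those for a are dominated in absolute value by those for |a|; the
   latter are the stated bounds, attained by the member of the class with parameter
   |a|.  The k_n come from (1 - z^2) k_a' = 1 + 2 a k_a: along the segment from 0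
   to z, p = 1 + 2 a k_a satisfies p' = a p L' with L = Log ((1 + t z) / (1 - t z)),
   hence p = exp (a L) = ((1 + z) / (1 - z))^a. *)

From Stdlib Require Import Reals Lra Lia.
From Coquelicot Require Import Coquelicot.
Open Scope R_scope.

(** * Power series on the unit disk *)

Notation is_C_series := (@is_series C_AbsRing C_NormedModule).
Notation is_C_derive := (@is_derive C_AbsRing C_NormedModule).

Lemma Rabs_Im_le_Cmod (w : C) : Rabs (Im w) <= Cmod w.
Proof. eapply Rle_trans; [apply Rmax_r | apply Rmax_Cmod]. Qed.

Lemma sum_n_Re (a : nat -> C) (n : nat) :
  Re (sum_n a n) = sum_n (fun k => Re (a k)) n.
Proof.
  induction n as [|n IH]; [now rewrite !sum_O|].
  rewrite !sum_Sn, <- IH. reflexivity.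
Qed.

Lemma sum_n_Im (a : nat -> C) (n : nat) :
  Im (sum_n a n) = sum_n (fun k => Im (a k)) n.
Proof.
  induction n as [|n IH]; [now rewrite !sum_O|].
  rewrite !sum_Sn, <- IH. reflexivity.
Qed.

Lemma is_C_series_split (a : nat -> C) (l : C) :
  is_C_series a l <->
  is_series (fun n => Re (a n)) (Re l) /\ is_series (fun n => Im (a n)) (Im l).
Proof.
  unfold is_series. split.
  - intros H; split; apply filterlim_locally; intros eps;
      generalize (proj1 (filterlim_locally _ _) H eps);
      apply filter_imp; intros n [H1 H2];
      [rewrite <- sum_n_Re | rewrite <- sum_n_Im]; assumption.
  - intros [H1 H2]. apply filterlim_locally. intros eps.
    generalize (filter_and _ _ (proj1 (filterlim_locally _ _) H1 eps)
                  (proj1 (filterlim_locally _ _) H2 eps)).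
    apply filter_imp. intros n [Hre Him].
    split; [rewrite sum_n_Re | rewrite sum_n_Im]; assumption.
Qed.

Lemma is_C_series_unique (a : nat -> C) (l l' : C) :
  is_C_series a l -> is_C_series a l' -> l = l'.
Proof.
  rewrite !is_C_series_split. intros [H1 H1'] [H2 H2'].
  apply injective_projections.
  - apply is_series_unique in H1, H2. unfold Re in *. congruence.
  - apply is_series_unique in H1', H2'. unfold Im in *. congruence.
Qed.

Definition radius_ge_1 (c : nat -> C) : Prop :=
  forall r, 0 <= r < 1 -> exists M, forall n, Cmod (c n) * r ^ n <= M.

Lemma radius_ge_1_geom (c : nat -> C) (r : R) : radius_ge_1 c -> 0 <= r < 1 ->
  exists M q, 0 <= M /\ 0 <= q < 1 /\ forall n, Cmod (c n) * r ^ n <= M * q ^ n.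
Proof.
  intros Hc Hr.
  set (r1 := (1 + r) / 2).
  assert (Hr1 : 0 < r1 < 1) by (unfold r1; lra).
  destruct (Hc r1) as [M HM]; [lra|].
  exists (Rmax M 0), (r / r1). split; [apply Rmax_r|]. split.
  - split; [apply Rdiv_le_0_compat; lra | apply (Rdiv_lt_1 r r1); [lra | unfold r1; lra]].
  - intros n.
    replace r with (r1 * (r / r1)) at 1 by (field; lra).
    rewrite Rpow_mult_distr, <- Rmult_assoc.
    apply Rmult_le_compat_r; [apply pow_le, Rdiv_le_0_compat; lra|].
    eapply Rle_trans; [apply HM | apply Rmax_l].
Qed.

Lemma ex_series_radius_ge_1 (c : nat -> C) (r : R) : radius_ge_1 c -> 0 <= r < 1 ->
  ex_series (fun n => Cmod (c n) * r ^ n).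
Proof.
  intros Hc Hr. destruct (radius_ge_1_geom c r Hc Hr) as [M [q [HM [Hq Hle]]]].
  apply (@ex_series_le R_AbsRing R_CompleteNormedModule _ (fun n => M * q ^ n)).
  - intros n. change norm with Rabs.
    rewrite Rabs_pos_eq; [apply Hle|].
    apply Rmult_le_pos; [apply Cmod_ge_0 | apply pow_le; lra].
  - apply (@ex_series_scal_l R_AbsRing R_NormedModule), ex_series_geom.
    rewrite Rabs_pos_eq; lra.
Qed.

Lemma INR_S_pow_bounded (q : R) : 0 <= q < 1 -> exists K, forall n, INR (S n) * q ^ n <= K.
Proof.
  intros Hq. destruct (Req_dec q 0) as [->|Hq0].
  { exists 1. intros [|n]; [simpl; lra | rewrite pow_i by lia; lra]. }
  (* q = 1 / (1 + t) and Bernoulli's inequality (1 + t) ^ n >= 1 + n t *)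
  set (t := / q - 1).
  assert (Ht : 0 < t).
  { assert (1 < / q) by (rewrite <- Rinv_1; apply Rinv_lt_contravar; lra). unfold t; lra. }
  assert (Hqt : q = / (1 + t)) by (unfold t; replace (1 + (/ q - 1)) with (/ q) by ring;
                                   now rewrite Rinv_inv).
  assert (Hbern : forall n, 1 + INR n * t <= (1 + t) ^ n).
  { induction n as [|n IH]; [simpl; lra|].
    rewrite S_INR. simpl. assert (0 <= INR n) by apply pos_INR. nra. }
  exists (1 + / t). intros n.
  assert (Hn := pos_INR n). assert (Hb := Hbern n).
  assert (Hpos : 0 < (1 + t) ^ n) by (apply pow_lt; lra).
  rewrite Hqt, pow_inv, S_INR.
  apply Rmult_le_reg_r with ((1 + t) ^ n); [exact Hpos|].
  rewrite Rmult_assoc, Rinv_l by lra.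
  assert (Htinv : / t * t = 1) by (field; lra).
  assert (0 < / t) by (apply Rinv_0_lt_compat; lra).
  nra.
Qed.

Lemma radius_ge_1_le (c d : nat -> C) :
  radius_ge_1 c -> (forall n, Cmod (d n) <= Cmod (c n)) -> radius_ge_1 d.
Proof.
  intros Hc Hle r Hr. destruct (Hc r Hr) as [M HM]. exists M. intros n.
  eapply Rle_trans; [|apply HM].
  apply Rmult_le_compat_r; [apply pow_le; lra | apply Hle].
Qed.

Lemma radius_ge_1_ext (c d : nat -> C) :
  radius_ge_1 c -> (forall n, c n = d n) -> radius_ge_1 d.
Proof. intros Hc E. apply (radius_ge_1_le c d Hc). intros n; rewrite E; lra. Qed.

Lemma radius_ge_1_plus (c d : nat -> C) :
  radius_ge_1 c -> radius_ge_1 d -> radius_ge_1 (fun n => (c n + d n)%C).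
Proof.
  intros Hc Hd r Hr. destruct (Hc r Hr) as [M1 H1], (Hd r Hr) as [M2 H2].
  exists (M1 + M2). intros n. specialize (H1 n). specialize (H2 n).
  assert (Htri := Cmod_triangle (c n) (d n)).
  assert (0 <= r ^ n) by (apply pow_le; lra).
  nra.
Qed.

Lemma radius_ge_1_scal (s : C) (c : nat -> C) :
  radius_ge_1 c -> radius_ge_1 (fun n => (s * c n)%C).
Proof.
  intros Hc r Hr. destruct (Hc r Hr) as [M HM].
  exists (Cmod s * M). intros n. rewrite Cmod_mult, Rmult_assoc.
  apply Rmult_le_compat_l; [apply Cmod_ge_0 | apply HM].
Qed.

Lemma radius_ge_1_shift (c : nat -> C) : radius_ge_1 c -> radius_ge_1 (fun n => c (S n)).
Proof.
  intros Hc r Hr. set (r1 := (1 + r) / 2).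
  destruct (Hc r1) as [M HM]; [unfold r1; lra|].
  exists (M / r1). intros n. specialize (HM (S n)). simpl in HM.
  apply Rle_trans with (Cmod (c (S n)) * r1 ^ n).
  - apply Rmult_le_compat_l; [apply Cmod_ge_0|]. apply pow_incr. unfold r1; lra.
  - apply Rmult_le_reg_r with r1; [unfold r1; lra|].
    replace (M / r1 * r1) with M by (field; unfold r1; lra). lra.
Qed.

Lemma radius_ge_1_mul_INR (c : nat -> C) :
  radius_ge_1 c -> radius_ge_1 (fun n => (INR (S n) * c n)%C).
Proof.
  intros Hc r Hr. destruct (radius_ge_1_geom c r Hc Hr) as [M [q [HM [Hq Hle]]]].
  destruct (INR_S_pow_bounded q Hq) as [K HK]. exists (M * K). intros n.
  rewrite Cmod_mult, Cmod_R, Rabs_pos_eq by apply pos_INR.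
  specialize (HK n). specialize (Hle n).
  assert (HS := pos_INR (S n)). assert (0 <= q ^ n) by (apply pow_le; lra).
  rewrite Rmult_assoc.
  apply Rle_trans with (INR (S n) * (M * q ^ n)); [apply Rmult_le_compat_l; auto|].
  nra.
Qed.

Definition CPS_incr_1 (c : nat -> C) (n : nat) : C :=
  match n with O => 0%C | S m => c m end.

Definition CPS_derive (c : nat -> C) (n : nat) : C := (INR (S n) * c (S n))%C.

Lemma radius_ge_1_incr_1 (c : nat -> C) : radius_ge_1 c -> radius_ge_1 (CPS_incr_1 c).
Proof.
  intros Hc r Hr. destruct (Hc r Hr) as [M HM].
  exists (Rmax M 0). intros [|n]; simpl.
  - rewrite Cmod_0, Rmult_0_l. apply Rmax_r.
  - eapply Rle_trans; [|apply Rmax_l]. eapply Rle_trans; [|apply (HM n)].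
    assert (0 <= Cmod (c n) * r ^ n) by (apply Rmult_le_pos; [apply Cmod_ge_0 | apply pow_le; lra]).
    nra.
Qed.

Lemma radius_ge_1_derive (c : nat -> C) : radius_ge_1 c -> radius_ge_1 (CPS_derive c).
Proof. intros Hc. apply (radius_ge_1_mul_INR (fun n => c (S n))), radius_ge_1_shift, Hc. Qed.

Create HintDb radius_ge_1.
#[local] Hint Resolve radius_ge_1_plus radius_ge_1_scal radius_ge_1_shift
  radius_ge_1_mul_INR radius_ge_1_incr_1 radius_ge_1_derive : radius_ge_1.

Definition CPSeries (c : nat -> C) (z : C) : C :=
  (Series (fun n => Re (c n * z ^ n)%C), Series (fun n => Im (c n * z ^ n)%C)).

Lemma CPSeries_correct (c : nat -> C) (z : C) : radius_ge_1 c -> Cmod z < 1 ->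
  is_C_series (fun n => (c n * z ^ n)%C) (CPSeries c z).
Proof.
  intros Hc Hz.
  assert (Hs := ex_series_radius_ge_1 c (Cmod z) Hc (conj (Cmod_ge_0 z) Hz)).
  apply is_C_series_split.
  split; apply Series_correct;
    refine (@ex_series_le R_AbsRing R_CompleteNormedModule _ _ _ Hs); intros n;
    change norm with Rabs; rewrite <- Cmod_pow, <- Cmod_mult.
  - apply re_le_Cmod.
  - apply Rabs_Im_le_Cmod.
Qed.

Lemma CPSeries_unique (c : nat -> C) (z l : C) : radius_ge_1 c -> Cmod z < 1 ->
  is_C_series (fun n => (c n * z ^ n)%C) l -> CPSeries c z = l.
Proof. intros Hc Hz. apply is_C_series_unique, CPSeries_correct; assumption. Qed.

Lemma CPSeries_ext (c d : nat -> C) (z : C) :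
  (forall n, c n = d n) -> CPSeries c z = CPSeries d z.
Proof.
  intros E. unfold CPSeries.
  f_equal; apply Series_ext; intros n; now rewrite E.
Qed.

Lemma CPSeries_plus (c d : nat -> C) (z : C) :
  radius_ge_1 c -> radius_ge_1 d -> Cmod z < 1 ->
  CPSeries (fun n => (c n + d n)%C) z = (CPSeries c z + CPSeries d z)%C.
Proof.
  intros Hc Hd Hz. apply CPSeries_unique; [now apply radius_ge_1_plus | exact Hz|].
  eapply is_series_ext;
    [|exact (is_series_plus _ _ _ _ (CPSeries_correct c z Hc Hz) (CPSeries_correct d z Hd Hz))].
  intros n. apply injective_projections; simpl; ring.
Qed.

Lemma CPSeries_scal (s : C) (c : nat -> C) (z : C) : radius_ge_1 c -> Cmod z < 1 ->
  CPSeries (fun n => (s * c n)%C) z = (s * CPSeries c z)%C.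
Proof.
  intros Hc Hz. apply CPSeries_unique; [now apply radius_ge_1_scal | exact Hz|].
  eapply is_series_ext; [|exact (is_series_scal s _ _ (CPSeries_correct c z Hc Hz))].
  intros n. apply injective_projections; simpl; ring.
Qed.

Lemma CPSeries_decr_1 (c : nat -> C) (z : C) : radius_ge_1 c -> Cmod z < 1 ->
  CPSeries c z = (c 0%nat + z * CPSeries (fun n => c (S n)) z)%C.
Proof.
  intros Hc Hz. apply CPSeries_unique; [exact Hc | exact Hz|].
  apply is_series_decr_1.
  match goal with |- is_series _ ?l =>
    replace l with (scal z (CPSeries (fun n => c (S n)) z))
      by (apply injective_projections; simpl; ring) end.
  eapply is_series_ext;
    [|exact (is_series_scal z _ _ (CPSeries_correct _ z (radius_ge_1_shift c Hc) Hz))].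
  intros n. apply injective_projections; simpl; ring.
Qed.

Lemma CPSeries_0 (c : nat -> C) : radius_ge_1 c -> CPSeries c 0 = c 0%nat.
Proof.
  intros Hc. rewrite CPSeries_decr_1 by (rewrite ?Cmod_0; (assumption || lra)). ring.
Qed.

Lemma CPSeries_incr_1 (c : nat -> C) (z : C) : radius_ge_1 c -> Cmod z < 1 ->
  CPSeries (CPS_incr_1 c) z = (z * CPSeries c z)%C.
Proof.
  intros Hc Hz. rewrite CPSeries_decr_1 by (try apply radius_ge_1_incr_1; assumption).
  simpl. rewrite (CPSeries_ext _ c) by reflexivity. ring.
Qed.

Lemma is_C_derive_eps (f : C -> C) (z d : C) :
  is_C_derive f z d <->
  forall eps, 0 < eps -> exists del, 0 < del /\ forall y, Cmod (y - z) < del ->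
    Cmod (f y - f z - (y - z) * d) <= eps * Cmod (y - z).
Proof.
  split.
  - intros [_ H] eps Heps.
    specialize (H z (fun P HP => HP) (mkposreal eps Heps)).
    apply (@locally_le_locally_norm C_AbsRing (AbsRing_NormedModule C_AbsRing)) in H.
    destruct H as [del Hdel].
    exists del. split; [apply cond_pos|]. intros y Hy. exact (Hdel y Hy).
  - intros H. split; [apply is_linear_scal_l|].
    intros x Hx.
    apply (@is_filter_lim_locally_unique C_AbsRing (AbsRing_NormedModule C_AbsRing)) in Hx.
    subst x. intros eps.
    apply (@locally_norm_le_locally C_AbsRing (AbsRing_NormedModule C_AbsRing)).
    destruct (H eps (cond_pos eps)) as [del [Hd Hdel]].
    exists (mkposreal del Hd). intros y Hy. exact (Hdel y Hy).
Qed.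

Lemma Series_nonneg (a : nat -> R) : (forall n, 0 <= a n) -> ex_series a -> 0 <= Series a.
Proof.
  intros Ha Hs. apply Rle_trans with (Series (fun n => 0 * a n)).
  - rewrite Series_scal_l. lra.
  - apply Series_le; [|exact Hs]. intros n. specialize (Ha n). lra.
Qed.

Lemma Cmod_series_le (a : nat -> C) (l : C) (b : nat -> R) :
  is_C_series a l -> (forall n, Cmod (a n) <= b n) -> ex_series b ->
  Cmod l <= sqrt 2 * Series b.
Proof.
  intros Ha Hb Hs. eapply Rle_trans; [apply Cmod_2Rmax|].
  apply Rmult_le_compat_l; [apply sqrt_pos|].
  apply is_C_series_split in Ha as [H1 H2].
  apply is_series_unique in H1, H2.
  assert (Hre : forall n, Rabs (Re (a n)) <= b n)
    by (intros n; eapply Rle_trans; [apply re_le_Cmod | apply Hb]).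
  assert (Him : forall n, Rabs (Im (a n)) <= b n)
    by (intros n; eapply Rle_trans; [apply Rabs_Im_le_Cmod | apply Hb]).
  assert (bound : forall u : nat -> R, (forall n, Rabs (u n) <= b n) -> Rabs (Series u) <= Series b).
  { intros u Hu.
    assert (Hus : ex_series (fun n => Rabs (u n))).
    { refine (@ex_series_le R_AbsRing R_CompleteNormedModule _ _ _ Hs).
      intros n. change norm with Rabs. now rewrite Rabs_Rabsolu. }
    eapply Rle_trans; [apply Series_Rabs, Hus|].
    apply Series_le; [|exact Hs]. intros n. split; [apply Rabs_pos | apply Hu]. }
  change (Rmax (Rabs (Re l)) (Rabs (Im l)) <= Series b).
  apply Rmax_lub; [rewrite <- H1 | rewrite <- H2]; apply bound; assumption.
Qed.

Definition pow_rem (z u : C) (n : nat) : C :=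
  (u ^ n - z ^ n - (u - z) * (INR n * z ^ pred n))%C.

Lemma pow_rem_0 (z u : C) : pow_rem z u 0 = 0%C.
Proof. unfold pow_rem. simpl. ring. Qed.

Lemma pow_rem_S (z u : C) (n : nat) :
  pow_rem z u (S n) = (u * pow_rem z u n + INR n * z ^ pred n * (u - z) ^ 2)%C.
Proof.
  unfold pow_rem. destruct n as [|n]; [simpl; ring|].
  rewrite !S_INR, !RtoC_plus. simpl. ring.
Qed.

Lemma pow_rem_bound (z u : C) (r : R) (n : nat) : Cmod z <= r -> Cmod u <= r ->
  r ^ 2 * Cmod (pow_rem z u n) <= INR n ^ 2 * r ^ n * Cmod (u - z) ^ 2.
Proof.
  intros Hz Hu.
  assert (Hr : 0 <= r) by (eapply Rle_trans; [apply Cmod_ge_0 | exact Hz]).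
  assert (Hm := Cmod_ge_0 (u - z)). set (m := Cmod (u - z)) in *.
  assert (Hm2 : 0 <= m ^ 2) by nra.
  induction n as [|n IH].
  - rewrite pow_rem_0, Cmod_0. simpl. lra.
  - assert (Hn := pos_INR n).
    assert (Hrn : 0 <= r ^ n) by (apply pow_le; lra).
    assert (Hpow : INR n * (r ^ 2 * Cmod z ^ pred n) <= INR n * (r * r ^ n)).
    { destruct n as [|n]; [simpl; lra|].
      apply Rmult_le_compat_l; [exact Hn|]. simpl pred.
      replace (r * r ^ S n) with (r ^ 2 * r ^ n) by (simpl; ring).
      apply Rmult_le_compat_l; [nra|]. apply pow_incr. split; [apply Cmod_ge_0 | exact Hz]. }
    assert (Hstep : Cmod (pow_rem z u (S n))
                    <= r * Cmod (pow_rem z u n) + INR n * Cmod z ^ pred n * m ^ 2).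
    { rewrite pow_rem_S. eapply Rle_trans; [apply Cmod_triangle|].
      rewrite !Cmod_mult, !Cmod_pow, Cmod_R, Rabs_pos_eq by exact Hn. fold m.
      assert (Hp := Cmod_ge_0 (pow_rem z u n)).
      apply Rplus_le_compat_r, Rmult_le_compat_r; assumption. }
    change (r ^ S n) with (r * r ^ n). rewrite S_INR.
    apply Rle_trans
      with (r * (r ^ 2 * Cmod (pow_rem z u n)) + INR n * (r ^ 2 * Cmod z ^ pred n) * m ^ 2).
    { replace (r * (r ^ 2 * Cmod (pow_rem z u n)) + INR n * (r ^ 2 * Cmod z ^ pred n) * m ^ 2)
        with (r ^ 2 * (r * Cmod (pow_rem z u n) + INR n * Cmod z ^ pred n * m ^ 2)) by ring.
      apply Rmult_le_compat_l; [nra | exact Hstep]. }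
    apply Rle_trans with (r * (INR n ^ 2 * r ^ n * m ^ 2) + INR n * (r * r ^ n) * m ^ 2).
    { apply Rplus_le_compat; [apply Rmult_le_compat_l | apply Rmult_le_compat_r]; assumption. }
    assert (0 <= (INR n + 1) * (r * r ^ n) * m ^ 2)
      by (apply Rmult_le_pos; [apply Rmult_le_pos; nra | exact Hm2]).
    nra.
Qed.

Section CPSeries_derivative.

Variables (c : nat -> C) (z : C).
Hypotheses (Hc : radius_ge_1 c) (Hz : Cmod z < 1).

Lemma is_C_series_taylor_rem (y : C) : Cmod y < 1 ->
  is_C_series (fun n => (c n * pow_rem z y n)%C)
    (CPSeries c y - CPSeries c z - (y - z) * CPSeries (CPS_derive c) z)%C.
Proof.
  intros Hy.
  assert (Hd : is_C_series (fun n => (c n * (INR n * z ^ pred n))%C) (CPSeries (CPS_derive c) z)).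
  { apply is_series_decr_1.
    match goal with |- is_series _ ?l =>
      replace l with (CPSeries (CPS_derive c) z) by (apply injective_projections; simpl; ring) end.
    eapply is_series_ext; [|exact (CPSeries_correct _ z (radius_ge_1_derive c Hc) Hz)].
    intros n. unfold CPS_derive. apply injective_projections; simpl; ring. }
  assert (H := is_series_minus _ _ _ _
                 (is_series_minus _ _ _ _ (CPSeries_correct c y Hc Hy) (CPSeries_correct c z Hc Hz))
                 (is_series_scal (y - z)%C _ _ Hd)).
  match type of H with is_series _ ?l =>
    replace (CPSeries c y - CPSeries c z - (y - z) * CPSeries (CPS_derive c) z)%C with l
      by (apply injective_projections; simpl; ring) end.
  eapply is_series_ext; [|exact H].
  intros n. unfold pow_rem. apply injective_projections; simpl; ring.
Qed.

Lemma CPSeries_taylor_bound (r : R) : Cmod z < r < 1 ->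
  exists K, 0 <= K /\ forall y, Cmod y <= r ->
    Cmod (CPSeries c y - CPSeries c z - (y - z) * CPSeries (CPS_derive c) z)%C
      <= K * Cmod (y - z) ^ 2.
Proof.
  intros Hr.
  assert (Hr0 : 0 < r) by (assert (0 <= Cmod z) by apply Cmod_ge_0; lra).
  assert (Hr2 : 0 < r ^ 2) by (apply pow_lt; lra).
  set (c2 n := (INR (S n) * (INR (S n) * c n))%C).
  assert (Hc2 : radius_ge_1 c2) by apply radius_ge_1_mul_INR, radius_ge_1_mul_INR, Hc.
  assert (Hs := ex_series_radius_ge_1 c2 r Hc2 (conj (Rlt_le _ _ Hr0) (proj2 Hr))).
  set (S2 := Series (fun n => Cmod (c2 n) * r ^ n)).
  assert (HS2 : 0 <= S2).
  { apply Series_nonneg; [|exact Hs].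
    intros n. apply Rmult_le_pos; [apply Cmod_ge_0 | apply pow_le; lra]. }
  exists (sqrt 2 * S2 / r ^ 2). split.
  { apply Rdiv_le_0_compat; [apply Rmult_le_pos; [apply sqrt_pos | exact HS2] | exact Hr2]. }
  intros y Hy.
  set (m := Cmod (y - z)).
  assert (Hm2 : 0 <= m ^ 2) by (apply pow_le, Cmod_ge_0).
  apply Rle_trans with (sqrt 2 * Series (fun n => Cmod (c2 n) * r ^ n * (m ^ 2 / r ^ 2))).
  { apply (Cmod_series_le (fun n => (c n * pow_rem z y n)%C)).
    - apply is_C_series_taylor_rem. lra.
    - intros n. rewrite Cmod_mult.
      assert (HE := pow_rem_bound z y r n ltac:(lra) Hy). fold m in HE.
      assert (E2 : Cmod (c2 n) = INR (S n) ^ 2 * Cmod (c n)).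
      { unfold c2. rewrite !Cmod_mult, Cmod_R, Rabs_pos_eq by apply pos_INR. ring. }
      rewrite E2.
      assert (Hn : INR n ^ 2 <= INR (S n) ^ 2)
        by (rewrite S_INR; assert (0 <= INR n) by apply pos_INR; nra).
      assert (Hcn := Cmod_ge_0 (c n)). assert (0 <= r ^ n) by (apply pow_le; lra).
      apply Rmult_le_reg_l with (r ^ 2); [exact Hr2|].
      replace (r ^ 2 * (INR (S n) ^ 2 * Cmod (c n) * r ^ n * (m ^ 2 / r ^ 2)))
        with (Cmod (c n) * (INR (S n) ^ 2 * r ^ n * m ^ 2)) by (field; lra).
      replace (r ^ 2 * (Cmod (c n) * Cmod (pow_rem z y n)))
        with (Cmod (c n) * (r ^ 2 * Cmod (pow_rem z y n))) by ring.
      apply Rmult_le_compat_l; [exact Hcn|].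
      eapply Rle_trans; [exact HE|].
      apply Rmult_le_compat_r; [exact Hm2|]. apply Rmult_le_compat_r; assumption.
    - apply ex_series_scal_r, Hs. }
  rewrite Series_scal_r. fold S2. right. unfold Rdiv. ring.
Qed.

Lemma is_C_derive_CPSeries : is_C_derive (CPSeries c) z (CPSeries (CPS_derive c) z).
Proof.
  set (r := (1 + Cmod z) / 2).
  assert (Hzr : Cmod z < r < 1) by (unfold r; lra).
  destruct (CPSeries_taylor_bound r Hzr) as [K [HK Hbound]].
  apply is_C_derive_eps. intros eps Heps.
  exists (Rmin (r - Cmod z) (eps / (K + 1))). split.
  { apply Rmin_pos; [lra | apply Rdiv_lt_0_compat; lra]. }
  intros y Hy.
  assert (Hm := Cmod_ge_0 (y - z)).
  assert (Hy1 : Cmod (y - z) < r - Cmod z) by (eapply Rlt_le_trans; [exact Hy | apply Rmin_l]).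
  assert (Hy2 : Cmod (y - z) < eps / (K + 1)) by (eapply Rlt_le_trans; [exact Hy | apply Rmin_r]).
  assert (Hyr : Cmod y <= r).
  { replace y with (z + (y - z))%C by ring.
    eapply Rle_trans; [apply Cmod_triangle | lra]. }
  eapply Rle_trans; [apply Hbound, Hyr|].
  assert (Hkm : (K + 1) * Cmod (y - z) <= eps).
  { apply Rmult_lt_compat_l with (r := K + 1) in Hy2; [|lra].
    replace ((K + 1) * (eps / (K + 1))) with eps in Hy2 by (field; lra). lra. }
  nra.
Qed.

End CPSeries_derivative.

Lemma is_C_derive_punctured_zero (f : C -> C) (d : C) (r : R) : 0 < r ->
  is_C_derive f (RtoC 0) d -> (forall z, 0 < Cmod z < r -> f z = 0%C) -> f 0 = 0%C.
Proof.
  intros Hr Hd Hf.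
  destruct (proj1 (is_C_derive_eps f (RtoC 0) d) Hd 1 Rlt_0_1) as [del [Hdel Hb]].
  apply Cmod_eq_0, Rle_antisym; [|apply Cmod_ge_0].
  apply Rnot_lt_le. intros Hq.
  set (K := 1 + Cmod d).
  assert (HK : 0 < K) by (assert (0 <= Cmod d) by apply Cmod_ge_0; unfold K; lra).
  (* the derivative estimate at y = s gives |f 0| <= s K, absurd for s small *)
  set (s := Rmin (Rmin del r / 2) (Cmod (f 0) / (2 * K))).
  assert (Hs0 : 0 < s) by (unfold s; apply Rmin_pos; apply Rdiv_lt_0_compat; try apply Rmin_pos; lra).
  assert (Hs1 : s < Rmin del r).
  { unfold s. eapply Rle_lt_trans; [apply Rmin_l|].
    assert (0 < Rmin del r) by (apply Rmin_pos; lra). lra. }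
  assert (HsK : s * K <= Cmod (f 0) / 2).
  { apply Rle_trans with (Cmod (f 0) / (2 * K) * K);
      [apply Rmult_le_compat_r; [lra | apply Rmin_r] | right; field; lra]. }
  assert (Hms : Cmod (RtoC s - RtoC 0) = s).
  { replace (RtoC s - RtoC 0)%C with (RtoC s) by ring. rewrite Cmod_R. apply Rabs_pos_eq. lra. }
  assert (Hfs : f s = 0%C).
  { apply Hf. rewrite Cmod_R, Rabs_pos_eq by lra.
    split; [lra|]. eapply Rlt_le_trans; [exact Hs1 | apply Rmin_r]. }
  specialize (Hb s). rewrite Hms, Hfs in Hb.
  specialize (Hb ltac:(eapply Rlt_le_trans; [exact Hs1 | apply Rmin_l])).
  assert (Htri := Cmod_triangle (- (0 - f 0 - (s - 0) * d)) (- ((s - 0) * d))).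
  replace (- (0 - f 0 - (s - 0) * d) + - ((s - 0) * d))%C with (f 0) in Htri by ring.
  rewrite !Cmod_opp, Cmod_mult, Hms in Htri.
  unfold K in HsK. nra.
Qed.

Lemma CPSeries_eq_0_coef (c : nat -> C) : radius_ge_1 c ->
  (forall z, Cmod z < 1 -> CPSeries c z = 0%C) -> forall n, c n = 0%C.
Proof.
  intros Hc H0 n. revert c Hc H0. induction n as [|n IH]; intros c Hc H0.
  { rewrite <- CPSeries_0 by exact Hc. apply H0. rewrite Cmod_0; lra. }
  assert (Hc' := radius_ge_1_shift c Hc).
  assert (Hc0 : c 0%nat = 0%C)
    by (rewrite <- CPSeries_0 by exact Hc; apply H0; rewrite Cmod_0; lra).
  (* z * (shifted series) = f z - c 0 vanishes, so the shifted series vanishes off 0 *)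
  assert (Hoff : forall z, 0 < Cmod z < 1 -> CPSeries (fun k => c (S k)) z = 0%C).
  { intros z Hz.
    assert (E := CPSeries_decr_1 c z Hc (proj2 Hz)). rewrite H0, Hc0 in E by apply Hz.
    destruct (Ceq_dec (CPSeries (fun k => c (S k)) z) 0) as [E0|Hn]; [exact E0|].
    exfalso. apply (Cmult_neq_0 z _ (proj2 (Cmod_gt_0 z) (proj1 Hz)) Hn).
    rewrite E. ring. }
  apply (IH _ Hc'). intros z Hz.
  destruct (Ceq_dec z 0) as [->|Hz0].
  - exact (is_C_derive_punctured_zero _ _ 1 Rlt_0_1 (is_C_derive_CPSeries _ 0 Hc' Hz) Hoff).
  - apply Hoff. split; [apply Cmod_gt_0|]; assumption.
Qed.

Lemma CPSeries_coef_unique (c d : nat -> C) : radius_ge_1 c -> radius_ge_1 d ->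
  (forall z, Cmod z < 1 -> CPSeries c z = CPSeries d z) -> forall n, c n = d n.
Proof.
  intros Hc Hd H n.
  assert (Hcd := radius_ge_1_plus _ _ Hc (radius_ge_1_scal (-1) d Hd)).
  assert (E := CPSeries_eq_0_coef _ Hcd).
  replace (c n) with ((c n + -1 * d n) + d n)%C by ring.
  rewrite E; [ring|]. intros z Hz.
  rewrite CPSeries_plus, CPSeries_scal, H by (try apply radius_ge_1_scal; assumption). ring.
Qed.

Section Ray_derivative.

Variable p : C -> R.
Hypotheses (p_le_Cmod : forall w, Rabs (p w) <= Cmod w)
           (p_minus : forall w1 w2, p (w1 - w2)%C = p w1 - p w2)
           (p_scal : forall (s : R) w, p (s * w)%C = s * p w).

Lemma is_derive_ray (f : C -> C) (v d : C) (t : R) :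
  is_C_derive f (t * v)%C d -> is_derive (fun s : R => p (f (s * v)%C)) t (p (v * d)%C).
Proof.
  intros Hd. apply is_derive_Reals. intros eps Heps.
  assert (Hv := Cmod_ge_0 v).
  set (e := eps / (2 * (Cmod v + 1))).
  assert (He : 0 < e) by (apply Rdiv_lt_0_compat; lra).
  destruct (proj1 (is_C_derive_eps _ _ _) Hd e He) as [del [Hdel Hb]].
  assert (Hd' : 0 < del / (Cmod v + 1)) by (apply Rdiv_lt_0_compat; lra).
  exists (mkposreal _ Hd'). simpl. intros h Hh0 Hh.
  assert (Ey : (RtoC (t + h) * v - t * v)%C = (h * v)%C) by (rewrite RtoC_plus; ring).
  assert (Hah : 0 < Rabs h) by (apply Rabs_pos_lt; exact Hh0).
  assert (Hy : Cmod (RtoC (t + h) * v - t * v) < del).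
  { rewrite Ey, Cmod_mult, Cmod_R.
    apply Rmult_lt_compat_r with (r := Cmod v + 1) in Hh; [|lra].
    unfold Rdiv in Hh. rewrite Rmult_assoc, Rinv_l, Rmult_1_r in Hh by lra. nra. }
  specialize (Hb _ Hy). rewrite Ey, Cmod_mult, Cmod_R in Hb.
  assert (Hq : Rabs (p (f (RtoC (t + h) * v)%C) - p (f (t * v)%C) - h * p (v * d)%C)
               <= e * (Rabs h * Cmod v)).
  { rewrite <- p_scal, <- !p_minus. eapply Rle_trans; [apply p_le_Cmod|].
    replace (h * (v * d))%C with (h * v * d)%C by ring. exact Hb. }
  replace ((p (f (RtoC (t + h) * v)%C) - p (f (t * v)%C)) / h - p (v * d)%C)
    with ((p (f (RtoC (t + h) * v)%C) - p (f (t * v)%C) - h * p (v * d)%C) / h) by (field; exact Hh0).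
  unfold Rdiv. rewrite Rabs_mult, Rabs_inv.
  apply Rmult_lt_reg_r with (Rabs h); [exact Hah|].
  rewrite Rmult_assoc, Rinv_l, Rmult_1_r by lra.
  eapply Rle_lt_trans; [exact Hq|].
  assert (e * Cmod v < eps).
  { unfold e, Rdiv. apply Rmult_lt_reg_r with (2 * (Cmod v + 1)); [lra|].
    replace (eps * / (2 * (Cmod v + 1)) * Cmod v * (2 * (Cmod v + 1))) with (eps * Cmod v)
      by (field; lra). nra. }
  nra.
Qed.

End Ray_derivative.

Lemma is_derive_ray_Re (f : C -> C) (v d : C) (t : R) :
  is_C_derive f (t * v)%C d -> is_derive (fun s : R => Re (f (s * v)%C)) t (Re (v * d)%C).
Proof.
  apply is_derive_ray; [apply re_le_Cmod | |]; intros; unfold Re, Im; simpl; ring.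
Qed.

Lemma is_derive_ray_Im (f : C -> C) (v d : C) (t : R) :
  is_C_derive f (t * v)%C d -> is_derive (fun s : R => Im (f (s * v)%C)) t (Im (v * d)%C).
Proof.
  apply is_derive_ray; [apply Rabs_Im_le_Cmod | |]; intros; unfold Re, Im; simpl; ring.
Qed.

(** * The Taylor series of k_a *)

Lemma bounded_initial_segment (s : nat -> R) (N : nat) :
  exists M, forall n, (n <= N)%nat -> s n <= M.
Proof.
  induction N as [|N [M HM]].
  - exists (s 0%nat). intros n Hn. replace n with 0%nat by lia. lra.
  - exists (Rmax M (s (S N))). intros n Hn.
    destruct (Nat.eq_dec n (S N)) as [->|Hne]; [apply Rmax_r|].
    eapply Rle_trans; [apply HM; lia | apply Rmax_l].
Qed.

Lemma radius_ge_1_of_rec (u : nat -> R) (A : R) : 0 <= A ->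
  (forall m, Rabs (u (S (S m))) * (INR m + 2) <= INR m * Rabs (u m) + A * Rabs (u (S m))) ->
  radius_ge_1 (fun n => RtoC (u n)).
Proof.
  intros HA Hrec r Hr.
  set (s n := Rabs (u n) * r ^ n).
  assert (Hs : forall n, 0 <= s n)
    by (intros n; apply Rmult_le_pos; [apply Rabs_pos | apply pow_le; lra]).
  assert (H1r : 0 < 1 - r ^ 2) by nra.
  destruct (INR_unbounded (A / (1 - r ^ 2))) as [N HN].
  assert (HAN : A <= INR N * (1 - r ^ 2)).
  { apply Rle_trans with (A / (1 - r ^ 2) * (1 - r ^ 2));
      [right; field; lra | apply Rmult_le_compat_r; lra]. }
  destruct (bounded_initial_segment s (S N)) as [M HM].
  exists M.
  (* beyond N the recurrence is a contraction on the weighted terms s n *)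
  assert (Hpair : forall n, s n <= M /\ s (S n) <= M).
  { induction n as [|n [IH1 IH2]]; [split; apply HM; lia|]. split; [exact IH2|].
    destruct (Compare_dec.le_lt_dec (S (S n)) (S N)) as [Hle|Hlt]; [apply HM, Hle|].
    assert (HnN : INR N <= INR n) by (apply le_INR; lia).
    assert (Hn := pos_INR n).
    assert (Hrn : 0 <= r ^ n) by (apply pow_le; lra).
    apply Rmult_le_reg_r with (INR n + 2); [lra|].
    apply Rle_trans with (INR n * r ^ 2 * s n + A * r * s (S n)).
    { unfold s. specialize (Hrec n).
      replace (Rabs (u (S (S n))) * r ^ S (S n) * (INR n + 2))
        with (Rabs (u (S (S n))) * (INR n + 2) * (r ^ 2 * r ^ n)) by (simpl; ring).
      replace (INR n * r ^ 2 * (Rabs (u n) * r ^ n) + A * r * (Rabs (u (S n)) * r ^ S n))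
        with ((INR n * Rabs (u n) + A * Rabs (u (S n))) * (r ^ 2 * r ^ n)) by (simpl; ring).
      apply Rmult_le_compat_r; [nra | exact Hrec]. }
    assert (HM0 : 0 <= M) by (eapply Rle_trans; [apply (Hs 0%nat) | apply HM; lia]).
    assert (H1 : INR n * r ^ 2 * s n <= INR n * r ^ 2 * M)
      by (apply Rmult_le_compat_l; [nra | exact IH1]).
    assert (H2 : A * r * s (S n) <= A * M).
    { assert (0 <= A * s (S n)) by (apply Rmult_le_pos; [exact HA | apply Hs]).
      apply Rle_trans with (A * s (S n)); [nra | apply Rmult_le_compat_l; assumption]. }
    assert (H3 : A * M <= INR n * (1 - r ^ 2) * M).
    { apply Rmult_le_compat_r; [exact HM0|].
      eapply Rle_trans; [exact HAN | apply Rmult_le_compat_r; lra]. }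
    nra. }
  intros n. rewrite Cmod_R. apply Hpair.
Qed.

Definition CPS_one (n : nat) : C := match n with O => 1%C | S _ => 0%C end.

Lemma radius_ge_1_one : radius_ge_1 CPS_one.
Proof.
  intros r Hr. exists 1. intros [|n]; simpl.
  - rewrite Cmod_1. lra.
  - rewrite Cmod_0. lra.
Qed.

#[local] Hint Resolve radius_ge_1_one : radius_ge_1.

Lemma CPSeries_one (w : C) : Cmod w < 1 -> CPSeries CPS_one w = 1%C.
Proof.
  intros Hw. rewrite CPSeries_decr_1 by auto with radius_ge_1.
  rewrite (CPSeries_ext _ (fun n => 0 * CPS_one n)%C) by (intros n; simpl; ring).
  rewrite CPSeries_scal by auto with radius_ge_1. simpl. ring.
Qed.

(* The Taylor coefficients of k_a, read off from (1 - z^2) k_a' = 1 + 2 a k_a and k_a(0) = 0. *)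
Fixpoint k_coef (a : R) (n : nat) : R :=
  match n with
  | O => 0
  | S O => 1
  | S ((S m) as k) => (INR m * k_coef a m + 2 * a * k_coef a k) / (INR m + 2)
  end.

Definition k_coefC (a : R) (n : nat) : C := RtoC (k_coef a n).

Lemma k_coef_SS (a : R) (m : nat) :
  k_coef a (S (S m)) = (INR m * k_coef a m + 2 * a * k_coef a (S m)) / (INR m + 2).
Proof. reflexivity. Qed.

Lemma radius_ge_1_k_coef (a : R) : radius_ge_1 (k_coefC a).
Proof.
  apply (radius_ge_1_of_rec _ (2 * Rabs a)); [pose proof (Rabs_pos a); lra|].
  intros m. rewrite k_coef_SS.
  assert (Hm := pos_INR m).
  unfold Rdiv. rewrite Rabs_mult, (Rabs_pos_eq (/ _)) by (left; apply Rinv_0_lt_compat; lra).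
  rewrite Rmult_assoc, Rinv_l, Rmult_1_r by lra.
  eapply Rle_trans; [apply Rabs_triang|].
  rewrite !Rabs_mult, (Rabs_pos_eq (INR m)), (Rabs_pos_eq 2) by lra. lra.
Qed.

#[local] Hint Resolve radius_ge_1_k_coef : radius_ge_1.

Lemma k_coef_ode (a : R) (w : C) : Cmod w < 1 ->
  ((1 - w * w) * CPSeries (CPS_derive (k_coefC a)) w)%C
  = (1 + RtoC (2 * a) * CPSeries (k_coefC a) w)%C.
Proof.
  intros Hw. set (d := CPS_derive (k_coefC a)).
  transitivity (CPSeries (fun n => d n + -1 * CPS_incr_1 (CPS_incr_1 d) n)%C w).
  { rewrite CPSeries_plus, CPSeries_scal, !CPSeries_incr_1 by (unfold d; auto with radius_ge_1).
    ring. }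
  transitivity (CPSeries (fun n => CPS_one n + RtoC (2 * a) * k_coefC a n)%C w).
  2: { rewrite CPSeries_plus, CPSeries_scal, CPSeries_one by auto with radius_ge_1.
       reflexivity. }
  apply CPSeries_ext. unfold d, CPS_derive, k_coefC.
  intros [|[|m]]; cbn [CPS_incr_1 CPS_one].
  - simpl. ring.
  - rewrite k_coef_SS. simpl k_coef. simpl INR.
    apply injective_projections; simpl; field.
  - rewrite (k_coef_SS a (S m)), !S_INR.
    assert (0 <= INR m) by apply pos_INR.
    apply injective_projections; cbn -[k_coef INR]; field; lra.
Qed.

Lemma ln_sqrt (u : R) : 0 < u -> ln (sqrt u) = ln u / 2.
Proof.
  intros Hu. assert (Hs : 0 < sqrt u) by (apply sqrt_lt_R0; exact Hu).
  assert (E : ln u = ln (sqrt u) + ln (sqrt u)) by (rewrite <- ln_mult, sqrt_sqrt; lra).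
  lra.
Qed.

Definition cayley (w : C) : C := ((1 + w) / (1 - w))%C.

(* Np = |1 + t z|^2, Nm = |1 - t z|^2 and Dz = 1 - |t z|^2. *)
Definition Np (z : C) (t : R) : R := (1 + t * Re z) ^ 2 + (t * Im z) ^ 2.
Definition Nm (z : C) (t : R) : R := (1 - t * Re z) ^ 2 + (t * Im z) ^ 2.
Definition Dz (z : C) (t : R) : R := 1 - t ^ 2 * (Re z ^ 2 + Im z ^ 2).

(* The derivative of t |-> Log (cayley (t z)), that is 2 z / (1 - t^2 z^2). *)
Definition log_cayley_deriv (z : C) (t : R) : C :=
  (2 * Re z * Dz z t / (Np z t * Nm z t),
   2 * Im z * (1 + t ^ 2 * (Re z ^ 2 + Im z ^ 2)) / (Np z t * Nm z t)).

Section Cayley_ray.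

Variable z : C.

Lemma ray_sq_pos (t : R) : Cmod (t * z) < 1 -> 0 < Np z t /\ 0 < Nm z t /\ 0 < Dz z t.
Proof.
  intros H.
  assert (Hr := Cmod_ge_0 (t * z)). set (rho := Cmod (t * z)) in *.
  set (x := t * Re z). set (y := t * Im z).
  assert (E : x ^ 2 + y ^ 2 = rho ^ 2)
    by (unfold rho, x, y; rewrite Cmod2_alt; unfold Re, Im; simpl; ring).
  assert (Hx : - rho <= x <= rho) by (split; nra).
  unfold Np, Nm, Dz. fold x y.
  replace (t ^ 2 * (Re z ^ 2 + Im z ^ 2)) with (x ^ 2 + y ^ 2) by (unfold x, y; ring).
  repeat split; nra.
Qed.

Lemma Re_cayley_ray (t : R) : Cmod (t * z) < 1 -> Re (cayley (t * z)) = Dz z t / Nm z t.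
Proof.
  intros H. destruct (ray_sq_pos t H) as [_ [H2 _]].
  unfold cayley, Dz, Nm in *. unfold Re, Im in *. simpl. field. lra.
Qed.

Lemma Im_cayley_ray (t : R) : Cmod (t * z) < 1 -> Im (cayley (t * z)) = 2 * t * Im z / Nm z t.
Proof.
  intros H. destruct (ray_sq_pos t H) as [_ [H2 _]].
  unfold cayley, Nm in *. unfold Re, Im in *. simpl. field. lra.
Qed.

Lemma ln_Cmod_cayley_ray (t : R) : Cmod (t * z) < 1 ->
  ln (Cmod (cayley (t * z))) = (ln (Np z t) - ln (Nm z t)) / 2.
Proof.
  intros H. destruct (ray_sq_pos t H) as [H1 [H2 H3]].
  unfold Cmod at 1. change (fst ?w) with (Re w). change (snd ?w) with (Im w).
  rewrite Re_cayley_ray, Im_cayley_ray by exact H.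
  replace ((Dz z t / Nm z t) ^ 2 + (2 * t * Im z / Nm z t) ^ 2) with (Np z t / Nm z t)
    by (unfold Np, Nm, Dz in *; field; lra).
  rewrite ln_sqrt, ln_div by (try apply Rdiv_lt_0_compat; assumption). lra.
Qed.

Lemma Carg_cayley_ray (t : R) : Cmod (t * z) < 1 ->
  Carg (cayley (t * z)) = atan (2 * t * Im z / Dz z t).
Proof.
  intros H. destruct (ray_sq_pos t H) as [H1 [H2 H3]].
  unfold Carg. rewrite Re_cayley_ray, Im_cayley_ray by exact H.
  destruct (Rlt_dec 0 (Dz z t / Nm z t)) as [_|Hn].
  - f_equal. field. lra.
  - exfalso. apply Hn, Rdiv_lt_0_compat; assumption.
Qed.

Lemma Cmod_ray_lt_1_locally (t : R) : Cmod (t * z) < 1 ->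
  locally t (fun s => Cmod (s * z) < 1).
Proof.
  intros H. rewrite Cmod_mult, Cmod_R in H.
  assert (Hz := Cmod_ge_0 z).
  assert (Hd : 0 < (1 - Rabs t * Cmod z) / (Cmod z + 1)) by (apply Rdiv_lt_0_compat; lra).
  exists (mkposreal _ Hd). intros s Hs.
  change (Rabs (s - t) < (1 - Rabs t * Cmod z) / (Cmod z + 1)) in Hs.
  rewrite Cmod_mult, Cmod_R.
  assert (Rabs s <= Rabs t + Rabs (s - t)).
  { replace s with (t + (s - t)) at 1 by ring. apply Rabs_triang. }
  assert (Rabs (s - t) * (Cmod z + 1) < 1 - Rabs t * Cmod z).
  { apply Rmult_lt_compat_r with (r := Cmod z + 1) in Hs; [|lra].
    unfold Rdiv in Hs. rewrite Rmult_assoc, Rinv_l, Rmult_1_r in Hs by lra. exact Hs. }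
  assert (0 <= Rabs (s - t)) by apply Rabs_pos.
  nra.
Qed.

Lemma is_derive_ln_Cmod_cayley_ray (t : R) : Cmod (t * z) < 1 ->
  is_derive (fun s : R => ln (Cmod (cayley (s * z)))) t (Re (log_cayley_deriv z t)).
Proof.
  intros H. destruct (ray_sq_pos t H) as [H1 [H2 H3]].
  apply is_derive_ext_loc with (f := fun s => (ln (Np z s) - ln (Nm z s)) / 2).
  { eapply filter_imp; [|apply (Cmod_ray_lt_1_locally t H)].
    intros s Hs. symmetry. apply ln_Cmod_cayley_ray, Hs. }
  change (Re (log_cayley_deriv z t)) with (2 * Re z * Dz z t / (Np z t * Nm z t)).
  unfold Np, Nm, Dz in *.
  auto_derive; [lra|]. field. lra.
Qed.

Lemma is_derive_Carg_cayley_ray (t : R) : Cmod (t * z) < 1 ->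
  is_derive (fun s : R => Carg (cayley (s * z))) t (Im (log_cayley_deriv z t)).
Proof.
  intros H. destruct (ray_sq_pos t H) as [H1 [H2 H3]].
  apply is_derive_ext_loc with (f := fun s => atan (2 * s * Im z / Dz z s)).
  { eapply filter_imp; [|apply (Cmod_ray_lt_1_locally t H)].
    intros s Hs. symmetry. apply Carg_cayley_ray, Hs. }
  change (Im (log_cayley_deriv z t))
    with (2 * Im z * (1 + t ^ 2 * (Re z ^ 2 + Im z ^ 2)) / (Np z t * Nm z t)).
  unfold Np, Nm, Dz in *.
  auto_derive; [lra|]. field. repeat split; nra.
Qed.

Lemma log_cayley_deriv_mul (t : R) : Cmod (t * z) < 1 ->
  (log_cayley_deriv z t * (1 - (t * z) * (t * z)))%C = (2 * z)%C.
Proof.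
  intros H. destruct (ray_sq_pos t H) as [H1 [H2 H3]].
  unfold log_cayley_deriv, Np, Nm, Dz in *. unfold Re, Im in *.
  apply injective_projections; simpl; field; lra.
Qed.

Lemma log_cayley_ray_0 :
  ln (Cmod (cayley (0 * z))) = 0 /\ Carg (cayley (0 * z)) = 0.
Proof.
  assert (H0 : Cmod (0 * z) < 1) by (rewrite Cmod_mult, Cmod_0; lra).
  rewrite ln_Cmod_cayley_ray, Carg_cayley_ray by exact H0.
  replace (Np z 0) with (Nm z 0) by (unfold Np, Nm; ring).
  replace (2 * 0 * Im z / Dz z 0) with 0 by (unfold Rdiv; ring).
  rewrite atan_0. split; lra.
Qed.

End Cayley_ray.

Lemma exp_ode_solution (a : R) (p1 p2 m1 m2 q1 q2 : R -> R) :
  (forall t, 0 <= t <= 1 ->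
     is_derive p1 t (a * (p1 t * q1 t - p2 t * q2 t)) /\
     is_derive p2 t (a * (p1 t * q2 t + p2 t * q1 t)) /\
     is_derive m1 t (q1 t) /\ is_derive m2 t (q2 t)) ->
  p1 0 = 1 -> p2 0 = 0 -> m1 0 = 0 -> m2 0 = 0 ->
  p1 1 = exp (a * m1 1) * cos (a * m2 1) /\ p2 1 = exp (a * m1 1) * sin (a * m2 1).
Proof.
  intros Hd P1 P2 M1 M2.
  (* real and imaginary parts of (p1 + i p2) exp (- a (m1 + i m2)), which is constant *)
  set (E1 t := p1 t * exp (- a * m1 t) * cos (a * m2 t) + p2 t * exp (- a * m1 t) * sin (a * m2 t)).
  set (E2 t := p2 t * exp (- a * m1 t) * cos (a * m2 t) - p1 t * exp (- a * m1 t) * sin (a * m2 t)).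
  assert (Hconst : forall t, 0 <= t <= 1 -> is_derive E1 t 0 /\ is_derive E2 t 0).
  { intros t Ht. destruct (Hd t Ht) as [D1 [D2 [D3 D4]]].
    unfold E1, E2. split; auto_derive;
      try (repeat split; eexists; eassumption);
      replace (Derive (fun x : R => p1 x) t) with (a * (p1 t * q1 t - p2 t * q2 t))
        by (symmetry; apply is_derive_unique, D1);
      replace (Derive (fun x : R => p2 x) t) with (a * (p1 t * q2 t + p2 t * q1 t))
        by (symmetry; apply is_derive_unique, D2);
      replace (Derive (fun x : R => m1 x) t) with (q1 t) by (symmetry; apply is_derive_unique, D3);
      replace (Derive (fun x : R => m2 x) t) with (q2 t) by (symmetry; apply is_derive_unique, D4);
      ring. }
  assert (HE1 : E1 1 = E1 0) by (symmetry; apply eq_is_derive; [intros t Ht; apply Hconst, Ht | lra]).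
  assert (HE2 : E2 1 = E2 0) by (symmetry; apply eq_is_derive; [intros t Ht; apply Hconst, Ht | lra]).
  unfold E1, E2 in HE1, HE2. rewrite P1, P2, M1, M2, !Rmult_0_r, exp_0, cos_0, sin_0 in HE1, HE2.
  set (e := exp (- a * m1 1)) in *. set (co := cos (a * m2 1)) in *. set (si := sin (a * m2 1)) in *.
  assert (He : exp (a * m1 1) * e = 1).
  { unfold e. rewrite <- exp_plus. replace (a * m1 1 + - a * m1 1) with 0 by ring. apply exp_0. }
  assert (Hcs : si ^ 2 + co ^ 2 = 1) by (unfold si, co; rewrite <- !Rsqr_pow2; apply sin2_cos2).
  assert (Hp1 : p1 1 * e = co).
  { assert (X : p1 1 * e * (si ^ 2 + co ^ 2)
                = co * (p1 1 * e * co + p2 1 * e * si) - si * (p2 1 * e * co - p1 1 * e * si)) by ring.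
    rewrite Hcs, HE1, HE2 in X. lra. }
  assert (Hp2 : p2 1 * e = si).
  { assert (X : p2 1 * e * (si ^ 2 + co ^ 2)
                = si * (p1 1 * e * co + p2 1 * e * si) + co * (p2 1 * e * co - p1 1 * e * si)) by ring.
    rewrite Hcs, HE1, HE2 in X. lra. }
  split.
  - rewrite <- Hp1. transitivity (p1 1 * (exp (a * m1 1) * e)); [rewrite He|]; ring.
  - rewrite <- Hp2. transitivity (p2 1 * (exp (a * m1 1) * e)); [rewrite He|]; ring.
Qed.

Lemma k_series_ray_deriv (a : R) (z : C) (t : R) : Cmod (t * z) < 1 ->
  (z * CPSeries (CPS_derive (k_coefC a)) (t * z))%C
  = (/ 2 * (1 + RtoC (2 * a) * CPSeries (k_coefC a) (t * z)) * log_cayley_deriv z t)%C.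
Proof.
  intros H. rewrite <- k_coef_ode by exact H.
  transitivity (/ 2 * (log_cayley_deriv z t * (1 - t * z * (t * z)))
                * CPSeries (CPS_derive (k_coefC a)) (t * z))%C.
  - rewrite log_cayley_deriv_mul by exact H. field.
  - ring.
Qed.

Lemma is_derive_lin2 (f g : R -> R) (t df dg c1 c2 : R) :
  is_derive f t df -> is_derive g t dg ->
  is_derive (fun s => c1 * f s + c2 * g s) t (c1 * df + c2 * dg).
Proof.
  intros Hf Hg.
  apply (is_derive_plus (fun s => c1 * f s) (fun s => c2 * g s)); apply is_derive_scal; assumption.
Qed.

Lemma is_derive_affine (f : R -> R) (t df c0 c1 : R) :
  is_derive f t df -> is_derive (fun s => c0 + c1 * f s) t (c1 * df).
Proof.
  intros Hf. auto_derive; [eexists; exact Hf|].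
  replace (Derive (fun x : R => f x) t) with df by (symmetry; apply is_derive_unique, Hf). ring.
Qed.

Section K_fun_series.

Variables (a : R) (z : C).
Hypothesis Hz : Cmod z < 1.

Let Sk (s : R) : C := CPSeries (k_coefC a) (s * z).
Let L1 (s : R) : R := ln (Cmod (cayley (s * z))).
Let L2 (s : R) : R := Carg (cayley (s * z)).
Let q (s : R) : C := log_cayley_deriv z s.

Lemma Cmod_ray_lt_1 (t : R) : 0 <= t <= 1 -> Cmod (t * z) < 1.
Proof.
  intros Ht. rewrite Cmod_mult, Cmod_R, Rabs_pos_eq by lra.
  assert (0 <= Cmod z) by apply Cmod_ge_0. nra.
Qed.

Lemma k_series_ray_derivatives (t : R) : 0 <= t <= 1 ->
  is_derive (fun s => Re (Sk s)) t
    (/ 2 * ((1 + 2 * a * Re (Sk t)) * Re (q t) - 2 * a * Im (Sk t) * Im (q t))) /\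
  is_derive (fun s => Im (Sk s)) t
    (/ 2 * ((1 + 2 * a * Re (Sk t)) * Im (q t) + 2 * a * Im (Sk t) * Re (q t))) /\
  is_derive L1 t (Re (q t)) /\ is_derive L2 t (Im (q t)).
Proof.
  intros Ht. assert (H := Cmod_ray_lt_1 t Ht).
  assert (HD := is_C_derive_CPSeries _ _ (radius_ge_1_k_coef a) H).
  assert (E := k_series_ray_deriv a z t H).
  split; [|split; [|split]].
  - refine (eq_ind _ (is_derive _ t) (is_derive_ray_Re _ _ _ _ HD) _ _).
    rewrite E. unfold Sk, q.
    set (L := log_cayley_deriv z t). set (S := CPSeries (k_coefC a) (t * z)).
    clearbody L S. unfold Re, Im. simpl. field.
  - refine (eq_ind _ (is_derive _ t) (is_derive_ray_Im _ _ _ _ HD) _ _).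
    rewrite E. unfold Sk, q.
    set (L := log_cayley_deriv z t). set (S := CPSeries (k_coefC a) (t * z)).
    clearbody L S. unfold Re, Im. simpl. field.
  - apply is_derive_ln_Cmod_cayley_ray, H.
  - apply is_derive_Carg_cayley_ray, H.
Qed.

Lemma k_series_ray_0 : Sk 0 = 0%C /\ L1 0 = 0 /\ L2 0 = 0.
Proof.
  split; [|exact (log_cayley_ray_0 z)].
  unfold Sk. replace (RtoC 0 * z)%C with (RtoC 0) by ring.
  rewrite CPSeries_0 by apply radius_ge_1_k_coef. reflexivity.
Qed.

Lemma k_series_ray_1 : Sk 1 = CPSeries (k_coefC a) z /\ Clog (cayley z) = (L1 1, L2 1).
Proof. unfold Sk, L1, L2, Clog. now rewrite Cmult_1_l. Qed.

Lemma k_series_half_log : a = 0 -> CPSeries (k_coefC a) z = (RtoC (1 / 2) * Clog (cayley z))%C.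
Proof.
  intros Ha. destruct k_series_ray_0 as [S0 [L10 L20]]. destruct k_series_ray_1 as [S1 W1].
  assert (Hzero : forall t, 0 <= t <= 1 ->
    is_derive (fun s => 2 * Re (Sk s) + -1 * L1 s) t 0 /\
    is_derive (fun s => 2 * Im (Sk s) + -1 * L2 s) t 0).
  { intros t Ht. destruct (k_series_ray_derivatives t Ht) as [D1 [D2 [D3 D4]]].
    rewrite Ha in D1, D2. split.
    - refine (@eq_ind R _ (is_derive _ t) (is_derive_lin2 _ _ _ _ _ 2 (-1) D1 D3) _ _). field.
    - refine (@eq_ind R _ (is_derive _ t) (is_derive_lin2 _ _ _ _ _ 2 (-1) D2 D4) _ _). field. }
  assert (E1 := eq_is_derive _ 0 1 (fun t Ht => proj1 (Hzero t Ht)) Rlt_0_1).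
  assert (E2 := eq_is_derive _ 0 1 (fun t Ht => proj2 (Hzero t Ht)) Rlt_0_1).
  cbv beta in E1, E2. rewrite S0, L10 in E1. rewrite S0, L20 in E2.
  rewrite <- S1, W1. set (w := Sk 1) in *. clearbody w. destruct w as [x y].
  unfold Re, Im in *. simpl in *. apply injective_projections; simpl; lra.
Qed.

Lemma k_series_power : a <> 0 ->
  CPSeries (k_coefC a) z = (/ RtoC (2 * a) * (Cpowr (cayley z) a - 1))%C.
Proof.
  intros Ha. destruct k_series_ray_0 as [S0 [L10 L20]]. destruct k_series_ray_1 as [S1 W1].
  (* p = 1 + 2 a Sk solves p' = a p L' with L = L1 + i L2, p(0) = 1, L(0) = 0 *)
  destruct (exp_ode_solution a (fun s => 1 + 2 * a * Re (Sk s)) (fun s => 0 + 2 * a * Im (Sk s))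
              L1 L2 (fun s => Re (q s)) (fun s => Im (q s))) as [P1 P2].
  - intros t Ht. destruct (k_series_ray_derivatives t Ht) as [D1 [D2 [D3 D4]]].
    split; [|split; [|split; assumption]].
    + refine (@eq_ind R _ (is_derive _ t) (is_derive_affine _ _ _ 1 (2 * a) D1) _ _). field.
    + refine (@eq_ind R _ (is_derive _ t) (is_derive_affine _ _ _ 0 (2 * a) D2) _ _). field.
  - rewrite S0. simpl. ring.
  - rewrite S0. simpl. ring.
  - exact L10.
  - exact L20.
  - cbv beta in P1, P2. unfold Cpowr, Cexp. rewrite <- S1, W1.
    set (w := Sk 1) in *. clearbody w. destruct w as [x y]. unfold Re, Im in *. simpl in *.
    replace (a * L1 1 - 0 * L2 1) with (a * L1 1) by ring.
    replace (a * L2 1 + 0 * L1 1) with (a * L2 1) by ring.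
    rewrite <- P1, <- P2.
    apply injective_projections; simpl; field; lra.
Qed.

End K_fun_series.

Lemma k_fun_CPSeries (a : R) (z : C) : Cmod z < 1 -> k_fun a z = CPSeries (k_coefC a) z.
Proof.
  intros Hz. unfold k_fun. fold (cayley z).
  destruct (Req_EM_T a 0) as [Ha|Ha].
  - symmetry. apply k_series_half_log; assumption.
  - symmetry. apply k_series_power; assumption.
Qed.

(** * The coefficients of the class *)

Lemma radius_ge_1_of_is_C_series (c : nat -> C) :
  (forall z, Cmod z < 1 -> exists l, is_C_series (fun n => (c n * z ^ n)%C) l) -> radius_ge_1 c.
Proof.
  intros H r Hr.
  destruct (H (RtoC r)) as [l Hl]; [rewrite Cmod_R, Rabs_pos_eq; lra|].
  apply is_C_series_split in Hl as [H1 H2].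
  destruct (filterlim_bounded _ (ex_intro _ 0 (ex_series_lim_0 _ (ex_intro _ _ H1)))) as [M1 HM1].
  destruct (filterlim_bounded _ (ex_intro _ 0 (ex_series_lim_0 _ (ex_intro _ _ H2)))) as [M2 HM2].
  exists (sqrt 2 * (M1 + M2)). intros n.
  replace (Cmod (c n) * r ^ n) with (Cmod (c n * RtoC r ^ n)%C)
    by (rewrite Cmod_mult, Cmod_pow, Cmod_R, Rabs_pos_eq; lra).
  eapply Rle_trans; [apply Cmod_2Rmax|]. apply Rmult_le_compat_l; [apply sqrt_pos|].
  specialize (HM1 n). specialize (HM2 n). change norm with Rabs in HM1, HM2.
  assert (0 <= Rabs (Re (c n * RtoC r ^ n)%C)) by apply Rabs_pos.
  assert (0 <= Rabs (Im (c n * RtoC r ^ n)%C)) by apply Rabs_pos.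
  apply Rmax_lub; unfold Re, Im in *; lra.
Qed.

Lemma is_C_derive_CPSeries_unique (f : C -> C) (c : nat -> C) (z d : C) :
  radius_ge_1 c -> Cmod z < 1 -> (forall w, Cmod w < 1 -> f w = CPSeries c w) ->
  is_C_derive f z d -> d = CPSeries (CPS_derive c) z.
Proof.
  intros Hc Hz Hf Hd.
  transitivity (C_derive f z); [symmetry; apply is_C_derive_unique, Hd|].
  apply is_C_derive_unique, (is_derive_ext_loc (CPSeries c)).
  - apply (@locally_norm_le_locally C_AbsRing (AbsRing_NormedModule C_AbsRing)).
    assert (He : 0 < 1 - Cmod z) by lra.
    exists (mkposreal _ He). intros w Hw. symmetry. apply Hf.
    change (Cmod (w - z) < 1 - Cmod z) in Hw.
    replace w with (z + (w - z))%C by ring.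
    eapply Rle_lt_trans; [apply Cmod_triangle | lra].
  - apply is_C_derive_CPSeries; assumption.
Qed.

Section Class_coefficients.

Variables (a lam : R) (h g : C -> C) (ca cb : nat -> C).
Hypothesis Hclass : in_class a lam h g ca cb.

Lemma radius_ge_1_class : radius_ge_1 ca /\ radius_ge_1 cb.
Proof.
  destruct Hclass as [_ [_ [_ HC]]].
  split; apply radius_ge_1_of_is_C_series; intros z Hz; destruct (HC z Hz) as [H1 [H2 _]]; eauto.
Qed.

Lemma class_CPSeries (z : C) : Cmod z < 1 -> h z = CPSeries ca z /\ g z = CPSeries cb z.
Proof.
  intros Hz. destruct radius_ge_1_class as [Ha Hb]. destruct Hclass as [_ [_ [_ HC]]].
  destruct (HC z Hz) as [H1 [H2 _]].
  split; symmetry; apply CPSeries_unique; assumption.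
Qed.

Lemma class_coef_k (n : nat) : ca n = (cb n + k_coefC a n)%C.
Proof.
  destruct radius_ge_1_class as [Ha Hb]. destruct Hclass as [_ [_ [_ HC]]].
  revert n. apply CPSeries_coef_unique; [exact Ha | auto with radius_ge_1 |].
  intros z Hz. rewrite CPSeries_plus, <- k_fun_CPSeries by auto with radius_ge_1.
  destruct (class_CPSeries z Hz) as [Eh Eg]. destruct (HC z Hz) as [_ [_ [Hk _]]].
  rewrite <- Hk, <- Eh, <- Eg. ring.
Qed.

Lemma class_coef_deriv (n : nat) : CPS_derive cb n = (lam * CPS_incr_1 (CPS_derive ca) n)%C.
Proof.
  destruct radius_ge_1_class as [Ha Hb]. destruct Hclass as [_ [_ [_ HC]]].
  revert n. apply CPSeries_coef_unique; [auto with radius_ge_1 .. |].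
  intros z Hz. rewrite CPSeries_scal, CPSeries_incr_1 by auto with radius_ge_1.
  destruct (HC z Hz) as [_ [_ [_ [dh [dg [Hdh [Hdg [Hnz Hq]]]]]]]].
  assert (Edh := is_C_derive_CPSeries_unique h ca z dh Ha Hz
                   (fun w Hw => proj1 (class_CPSeries w Hw)) Hdh).
  assert (Edg := is_C_derive_CPSeries_unique g cb z dg Hb Hz
                   (fun w Hw => proj2 (class_CPSeries w Hw)) Hdg).
  rewrite <- Edh, <- Edg.
  replace dg with (dg / dh * dh)%C by (field; exact Hnz).
  rewrite Hq. ring.
Qed.

End Class_coefficients.

Lemma Cexp_neq_0 (u : C) : Cexp u <> 0%C.
Proof.
  unfold Cexp. intros E.
  assert (E1 := f_equal fst E). assert (E2 := f_equal snd E). simpl in E1, E2.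
  assert (He := exp_pos (Re u)).
  assert (Hcs : sin (Im u) ^ 2 + cos (Im u) ^ 2 = 1) by (rewrite <- !Rsqr_pow2; apply sin2_cos2).
  assert (cos (Im u) = 0) by (apply Rmult_eq_reg_l with (exp (Re u)); lra).
  assert (sin (Im u) = 0) by (apply Rmult_eq_reg_l with (exp (Re u)); lra).
  nra.
Qed.

Lemma one_plus_k_fun_neq_0 (a : R) (z : C) : (1 + RtoC (2 * a) * k_fun a z)%C <> 0%C.
Proof.
  unfold k_fun. cbv zeta. destruct (Req_EM_T a 0) as [Ha|Ha].
  - subst a. intros E. apply (f_equal fst) in E. simpl in E. lra.
  - assert (Hnz : RtoC (2 * a) <> 0%C) by (intros E; apply (f_equal fst) in E; simpl in E; lra).
    unfold Cpowr. set (W := Cexp _).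
    replace (1 + RtoC (2 * a) * (/ RtoC (2 * a) * (W - 1)))%C with W by (field; exact Hnz).
    apply Cexp_neq_0.
Qed.

Lemma k_series_derive_neq_0 (a : R) (z : C) : Cmod z < 1 ->
  CPSeries (CPS_derive (k_coefC a)) z <> 0%C.
Proof.
  intros Hz E. apply (one_plus_k_fun_neq_0 a z).
  rewrite k_fun_CPSeries, <- k_coef_ode, E by exact Hz. ring.
Qed.

(* The coefficients forced by a_n - b_n = k_n and n b_n = lam (n - 1) a_(n-1). *)
Fixpoint h_coef (a lam : R) (n : nat) : R :=
  match n with
  | O => 0
  | S m => k_coef a (S m) + lam * INR m * h_coef a lam m / INR (S m)
  end.

Definition g_coef (a lam : R) (n : nat) : R := h_coef a lam n - k_coef a n.

Definition h_coefC (a lam : R) (n : nat) : C := RtoC (h_coef a lam n).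
Definition g_coefC (a lam : R) (n : nat) : C := RtoC (g_coef a lam n).

Lemma g_coef_S (a lam : R) (m : nat) :
  g_coef a lam (S m) = lam * INR m * h_coef a lam m / INR (S m).
Proof.
  unfold g_coef.
  change (h_coef a lam (S m)) with (k_coef a (S m) + lam * INR m * h_coef a lam m / INR (S m)).
  ring.
Qed.

Lemma radius_ge_1_h_coef (a lam : R) : 0 <= lam < 1 -> radius_ge_1 (h_coefC a lam).
Proof.
  intros Hl r Hr. destruct (radius_ge_1_k_coef a r Hr) as [M HM].
  assert (HM0 : 0 <= M).
  { eapply Rle_trans; [|apply (HM 0%nat)]. apply Rmult_le_pos; [apply Cmod_ge_0 | apply pow_le; lra]. }
  assert (Hlr : 0 <= lam * r < 1) by nra.
  exists (M / (1 - lam * r)). intros n. unfold h_coefC. rewrite Cmod_R.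
  induction n as [|n IH].
  { simpl. rewrite Rabs_R0, Rmult_0_l. apply Rdiv_le_0_compat; lra. }
  specialize (HM (S n)). unfold k_coefC in HM. rewrite Cmod_R in HM.
  change (h_coef a lam (S n)) with (k_coef a (S n) + lam * INR n * h_coef a lam n / INR (S n)).
  assert (Hn : 0 <= INR n / INR (S n) <= 1).
  { rewrite S_INR. assert (0 <= INR n) by apply pos_INR. split.
    - apply Rdiv_le_0_compat; lra.
    - apply Rmult_le_reg_r with (INR n + 1); [lra|].
      unfold Rdiv. rewrite Rmult_assoc, Rinv_l; lra. }
  replace (lam * INR n * h_coef a lam n / INR (S n)) with (lam * (INR n / INR (S n)) * h_coef a lam n)
    by (unfold Rdiv; ring).
  eapply Rle_trans; [apply Rmult_le_compat_r; [apply pow_le; lra | apply Rabs_triang]|].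
  rewrite Rmult_plus_distr_r, !Rabs_mult, (Rabs_pos_eq lam), (Rabs_pos_eq (INR n / INR (S n))) by lra.
  set (hn := Rabs (h_coef a lam n)) in *. assert (Hh : 0 <= hn) by apply Rabs_pos.
  assert (X : lam * (INR n / INR (S n)) * hn * r ^ S n <= lam * r * (hn * r ^ n)).
  { assert (0 <= hn * r ^ n) by (apply Rmult_le_pos; [exact Hh | apply pow_le; lra]).
    replace (lam * (INR n / INR (S n)) * hn * r ^ S n)
      with (lam * r * (hn * r ^ n) * (INR n / INR (S n)))
      by (simpl; ring).
    rewrite <- (Rmult_1_r (lam * r * (hn * r ^ n))) at 2.
    apply Rmult_le_compat_l; [apply Rmult_le_pos; nra | lra]. }
  assert (Y : lam * r * (hn * r ^ n) <= lam * r * (M / (1 - lam * r))) by (apply Rmult_le_compat_l; lra).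
  assert (Z : M + lam * r * (M / (1 - lam * r)) = M / (1 - lam * r)) by (field; lra).
  lra.
Qed.

Lemma RtoC_INR_S_neq_0 (n : nat) : RtoC (INR (S n)) <> 0%C.
Proof.
  intros E. apply (f_equal Re) in E. change (INR (S n) = 0) in E.
  assert (H := lt_0_INR (S n) (Nat.lt_0_succ n)). lra.
Qed.

Lemma class_coefs (a lam : R) (h g : C -> C) (ca cb : nat -> C) :
  in_class a lam h g ca cb -> forall n, ca n = h_coefC a lam n /\ cb n = g_coefC a lam n.
Proof.
  intros Hc.
  assert (Ha : forall n, ca n = h_coefC a lam n).
  { pose proof Hc as [H0 [H1 _]].
    induction n as [|m IH]; [exact H0|]. destruct m as [|k].
    - rewrite H1. unfold h_coefC. f_equal. simpl. field.
    - assert (D := class_coef_deriv a lam h g ca cb Hc (S k)).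
      unfold CPS_derive in D. cbn [CPS_incr_1] in D. rewrite IH in D.
      assert (HSS := lt_0_INR (S (S k)) (Nat.lt_0_succ (S k))).
      assert (Eb : cb (S (S k)) = RtoC (lam * INR (S k) * h_coef a lam (S k) / INR (S (S k)))).
      { replace (cb (S (S k))) with (/ INR (S (S k)) * (INR (S (S k)) * cb (S (S k))))%C
          by (field; apply RtoC_INR_S_neq_0).
        rewrite D. unfold h_coefC. apply injective_projections; cbn -[h_coef INR]; field; lra. }
      rewrite (class_coef_k a lam h g ca cb Hc), Eb. unfold k_coefC, h_coefC.
      rewrite <- RtoC_plus. f_equal. change (h_coef a lam (S (S k)))
        with (k_coef a (S (S k)) + lam * INR (S k) * h_coef a lam (S k) / INR (S (S k))). ring. }
  intros n. split; [apply Ha|].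
  replace (cb n) with (ca n - k_coefC a n)%C by (rewrite (class_coef_k a lam h g ca cb Hc); ring).
  rewrite Ha. unfold h_coefC, k_coefC, g_coefC, g_coef. now rewrite RtoC_minus.
Qed.

Lemma h_coef_split (a lam : R) (n : nat) : h_coefC a lam n = (g_coefC a lam n + k_coefC a n)%C.
Proof. unfold h_coefC, g_coefC, k_coefC, g_coef. rewrite <- RtoC_plus. f_equal. ring. Qed.

Lemma g_coef_derive (a lam : R) (n : nat) :
  CPS_derive (g_coefC a lam) n = (lam * CPS_incr_1 (CPS_derive (h_coefC a lam)) n)%C.
Proof.
  unfold CPS_derive, g_coefC, h_coefC. rewrite g_coef_S.
  destruct n as [|m]; cbn [CPS_incr_1].
  - apply injective_projections; simpl; field.
  - assert (HSS := lt_0_INR (S (S m)) (Nat.lt_0_succ (S m))).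
    apply injective_projections; cbn -[h_coef INR]; field; lra.
Qed.

Lemma radius_ge_1_g_coef (a lam : R) : 0 <= lam < 1 -> radius_ge_1 (g_coefC a lam).
Proof.
  intros Hl. apply (radius_ge_1_ext (fun n => h_coefC a lam n + -1 * k_coefC a n)%C).
  - apply radius_ge_1_plus, radius_ge_1_scal, radius_ge_1_k_coef. apply radius_ge_1_h_coef, Hl.
  - intros n. rewrite h_coef_split. ring.
Qed.

Lemma in_class_h_coef (a lam : R) : 0 <= lam < 1 ->
  in_class a lam (CPSeries (h_coefC a lam)) (CPSeries (g_coefC a lam)) (h_coefC a lam) (g_coefC a lam).
Proof.
  intros Hl.
  assert (Hh := radius_ge_1_h_coef a lam Hl). assert (Hg := radius_ge_1_g_coef a lam Hl).
  split; [reflexivity|]. split; [unfold h_coefC; f_equal; simpl; field|].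
  split; [unfold g_coefC, g_coef; f_equal; simpl; ring|].
  intros z Hz.
  set (dh := CPSeries (CPS_derive (h_coefC a lam)) z).
  set (dg := CPSeries (CPS_derive (g_coefC a lam)) z).
  assert (Edg : dg = (lam * (z * dh))%C).
  { unfold dg, dh. rewrite (CPSeries_ext _ _ z (g_coef_derive a lam)), CPSeries_scal, CPSeries_incr_1
      by auto with radius_ge_1.
    reflexivity. }
  assert (Edk : (dh - dg)%C = CPSeries (CPS_derive (k_coefC a)) z).
  { unfold dh, dg.
    rewrite (CPSeries_ext (CPS_derive (k_coefC a))
               (fun n => CPS_derive (h_coefC a lam) n + -1 * CPS_derive (g_coefC a lam) n)%C)
      by (intros n; unfold CPS_derive; rewrite h_coef_split; ring).
    rewrite CPSeries_plus, CPSeries_scal by auto with radius_ge_1. ring. }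
  assert (Hdh : dh <> 0%C).
  { intros E0. apply (k_series_derive_neq_0 a z Hz). rewrite <- Edk, Edg, E0. ring. }
  split; [apply CPSeries_correct; assumption|].
  split; [apply CPSeries_correct; assumption|].
  split.
  - rewrite k_fun_CPSeries by exact Hz.
    rewrite (CPSeries_ext _ _ z (h_coef_split a lam)), CPSeries_plus by auto with radius_ge_1. ring.
  - exists dh, dg. split; [apply is_C_derive_CPSeries; assumption|].
    split; [apply is_C_derive_CPSeries; assumption|].
    split; [exact Hdh|]. rewrite Edg. field. exact Hdh.
Qed.

Lemma k_coef_abs_le (a : R) (n : nat) : Rabs (k_coef a n) <= k_coef (Rabs a) n.
Proof.
  assert (Ha := Rabs_pos a).
  cut (Rabs (k_coef a n) <= k_coef (Rabs a) n /\ Rabs (k_coef a (S n)) <= k_coef (Rabs a) (S n));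
    [tauto|].
  induction n as [|n [IH1 IH2]].
  { simpl. rewrite Rabs_R0, Rabs_R1. lra. }
  split; [exact IH2|]. rewrite !k_coef_SS.
  assert (Hn := pos_INR n). assert (Hinv : 0 < / (INR n + 2)) by (apply Rinv_0_lt_compat; lra).
  unfold Rdiv. rewrite Rabs_mult, (Rabs_pos_eq (/ _)) by lra.
  apply Rmult_le_compat_r; [lra|].
  eapply Rle_trans; [apply Rabs_triang|].
  rewrite !Rabs_mult, (Rabs_pos_eq (INR n)), (Rabs_pos_eq 2) by lra.
  apply Rplus_le_compat; apply Rmult_le_compat_l; try assumption; lra.
Qed.

Lemma h_coef_abs_le (a lam : R) (n : nat) : 0 <= lam ->
  Rabs (h_coef a lam n) <= h_coef (Rabs a) lam n.
Proof.
  intros Hl. induction n as [|m IH]; [simpl; rewrite Rabs_R0; lra|].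
  change (h_coef ?b lam (S m)) with (k_coef b (S m) + lam * INR m * h_coef b lam m / INR (S m)).
  assert (Hm := pos_INR m). assert (HS := lt_0_INR (S m) (Nat.lt_0_succ m)).
  eapply Rle_trans; [apply Rabs_triang|]. apply Rplus_le_compat; [apply k_coef_abs_le|].
  unfold Rdiv.
  rewrite !Rabs_mult, Rabs_inv, (Rabs_pos_eq lam), (Rabs_pos_eq (INR m)), (Rabs_pos_eq (INR (S m)))
    by lra.
  apply Rmult_le_compat_r; [left; apply Rinv_0_lt_compat, HS|].
  apply Rmult_le_compat_l; [apply Rmult_le_pos; lra | exact IH].
Qed.

Lemma g_coef_abs_le (a lam : R) (n : nat) : 0 <= lam ->
  Rabs (g_coef a lam n) <= g_coef (Rabs a) lam n.
Proof.
  intros Hl. destruct n as [|m]; [unfold g_coef; simpl; rewrite Rminus_0_r, Rabs_R0; lra|].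
  rewrite !g_coef_S.
  assert (Hm := pos_INR m). assert (HS := lt_0_INR (S m) (Nat.lt_0_succ m)).
  unfold Rdiv.
  rewrite !Rabs_mult, Rabs_inv, (Rabs_pos_eq lam), (Rabs_pos_eq (INR m)), (Rabs_pos_eq (INR (S m)))
    by lra.
  apply Rmult_le_compat_r; [left; apply Rinv_0_lt_compat, HS|].
  apply Rmult_le_compat_l; [apply Rmult_le_pos; lra | apply h_coef_abs_le, Hl].
Qed.

Lemma coef_values_abs (a lam : R) :
  h_coef (Rabs a) lam 2 = Rabs a + lam / 2 /\
  h_coef (Rabs a) lam 3 = / 3 * Q a lam /\
  h_coef (Rabs a) lam 4 = / 3 * Rabs a ^ 3 + 2 / 3 * Rabs a + / 4 * lam * Q a lam /\
  g_coef (Rabs a) lam 3 = / 3 * lam ^ 2 + 2 / 3 * Rabs a * lam /\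
  g_coef (Rabs a) lam 4 = / 4 * lam * Q a lam.
Proof.
  unfold g_coef, Q. rewrite <- (pow2_abs a). simpl. repeat split; field.
Qed.

Section Class_bounds.

Variables (a lam : R) (h g : C -> C) (ca cb : nat -> C).
Hypothesis Hlam : 0 <= lam.

Lemma Cmod_class_coef_le : in_class a lam h g ca cb -> forall n,
  Cmod (ca n) <= h_coef (Rabs a) lam n /\ Cmod (cb n) <= g_coef (Rabs a) lam n.
Proof.
  intros Hc n. destruct (class_coefs a lam h g ca cb Hc n) as [-> ->].
  unfold h_coefC, g_coefC. rewrite !Cmod_R.
  split; [apply h_coef_abs_le | apply g_coef_abs_le]; exact Hlam.
Qed.

Lemma Cmod_class_coef_abs : in_class (Rabs a) lam h g ca cb -> forall n,
  Cmod (ca n) = h_coef (Rabs a) lam n /\ Cmod (cb n) = g_coef (Rabs a) lam n.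
Proof.
  intros Hc n. destruct (class_coefs _ lam h g ca cb Hc n) as [-> ->].
  unfold h_coefC, g_coefC. rewrite !Cmod_R.
  (* the coefficients for a nonnegative parameter dominate their own absolute values *)
  assert (Hh := h_coef_abs_le (Rabs a) lam n Hlam). assert (Hg := g_coef_abs_le (Rabs a) lam n Hlam).
  rewrite Rabs_Rabsolu in Hh, Hg.
  split; apply Rabs_pos_eq; eapply Rle_trans; [apply Rabs_pos | exact Hh | apply Rabs_pos | exact Hg].
Qed.

End Class_bounds.

Theorem theorem2p4 :
  forall (a lam : R), 0 <= lam < 1 ->
  (* the five coefficient bounds *)
  (forall (h g : C -> C) (ca cb : nat -> C),
     in_class a lam h g ca cb ->
     Cmod (ca 2%nat) <= Rabs a + lam / 2 /\
     Cmod (ca 3%nat) <= / 3 * Q a lam /\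
     Cmod (ca 4%nat) <= / 3 * Rabs a ^ 3 + 2 / 3 * Rabs a + / 4 * lam * Q a lam /\
     Cmod (cb 3%nat) <= / 3 * lam ^ 2 + 2 / 3 * Rabs a * lam /\
     Cmod (cb 4%nat) <= / 4 * lam * Q a lam) /\
  (* sharpness: for the same lambda and |a|, the bounds are attained *)
  (exists (a' : R) (h g : C -> C) (ca cb : nat -> C),
     Rabs a' = Rabs a /\ in_class a' lam h g ca cb /\
     Cmod (ca 2%nat) = Rabs a + lam / 2 /\
     Cmod (ca 3%nat) = / 3 * Q a lam /\
     Cmod (ca 4%nat) = / 3 * Rabs a ^ 3 + 2 / 3 * Rabs a + / 4 * lam * Q a lam /\
     Cmod (cb 3%nat) = / 3 * lam ^ 2 + 2 / 3 * Rabs a * lam /\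
     Cmod (cb 4%nat) = / 4 * lam * Q a lam).
Proof.
  intros a lam Hlam.
  destruct (coef_values_abs a lam) as [V2 [V3 [V4 [W3 W4]]]].
  rewrite <- V2, <- V3, <- V4, <- W3, <- W4.
  split.
  - intros h g ca cb Hc.
    assert (B := Cmod_class_coef_le a lam h g ca cb (proj1 Hlam) Hc).
    repeat split; apply B.
  - assert (Hc := in_class_h_coef (Rabs a) lam Hlam).
    assert (B := Cmod_class_coef_abs a lam _ _ _ _ (proj1 Hlam) Hc).
    do 5 eexists. split; [apply Rabs_Rabsolu|]. split; [exact Hc|].
    repeat split; apply B.
Qed.
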